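(* Let $L>0$ and let $a,c\in C^1_{\mathrm{pw}}[-L,L]$ with $a_{\min}\le a\le a_{\max}$, $c_{\min}\le c\le c_{\max}$, $a_{\min},c_{\min}>0$, and let $-L=z_0<\dots<z_N=L$ be a partition such that on each $\tau_j=(z_{j-1},z_j)$, $a,c\in C^1[z_{j-1},z_j]$ and each of $a',c'$ is either $>0$ throughout $\tau_j$ or $\le0$ throughout $\tau_j$. Define $\tilde a$ on $\tau_j$ by $\tilde a=a$ if $a'>0$ on $\tau_j$ and $\tilde a\equiv a^+(z_{j-1})$ if $a'\le0$ on $\tau_j$, and $\tilde c$ analogously from $c$. For $j=1,\dots,N-1$ let $$\alpha_j=\max\Big\{\frac{\tilde a^-(z_j)}{\tilde a^+(z_j)},1\Big\},\quad \sigma_j=\max\Big\{\frac{(\tilde c^2)^-(z_j)}{(\tilde c^2)^+(z_j)},1\Big\},\quad \gamma_j=\max\Big\{\frac{a^+(z_j)}{a^-(z_j)},\frac{(c^2)^+(z_j)}{(c^2)^-(z_j)},1\Big\}.$$ Define $A_1=0$ and $A_{j+1}=\alpha_j\sigma_j\gamma_j\big(\int_{\tau_j}\frac{1}{\tilde a\,\tilde c^2}+A_j\big)$ for $j=1,\dots,N-1$, and $$q(x)=\tilde a(x)\tilde c^2(x)\Big(\int_{z_{j-1}}^x\frac{ds}{\tilde a(s)\tilde c^2(s)}+A_j\Big),\qquad x\in\tau_j,\ 1\le j\le N.$$ Then $q$ is increasing on $[-L,L]$, $q(-L)=0$, and for each $j=1,\dots,N$, $$\partial_{\mathrm{pw}}\Big(\frac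 qa\Big)(x)\ge\frac1{a(x)},\qquad\partial_{\mathrm{pw}}\Big(\frac q{c^2}\Big)(x)\ge\frac1{c^2(x)},\qquad x\in\tau_j,$$ and $[q/a]_{z_j}\le0$, $[q/c^2]_{z_j}\le0$ for $j=1,\dots,N-1$.
   Context: $C^1_{\mathrm{pw}}[-L,L]$ is the set of $g:[-L,L]\to\mathbb{R}$ for which there is a finite partition $-L=z_0<\dots<z_N=L$ with $g\in C^1[z_{j-1},z_j]$ for each $j$ and, on each $(z_{j-1},z_j)$, either $g'>0$ throughout or $g'\le0$ throughout. For the partition, $g^+(z_j)$, $g^-(z_j)$ are the right and left one-sided limits, $[g]_{z_j}=g^-(z_j)-g^+(z_j)$ for interior points, and $\partial_{\mathrm{pw}}g=g'$ on each open subinterval. $q(-L)$ means the limit from the right. *)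

From Stdlib Require Import Reals ClassicalEpsilon.
From Coquelicot Require Import Coquelicot.
Open Scope R_scope.

(* The modified function \tilde g on tau_j = (zl, zr), built from the C^1
   piece g of the function on [zl, zr]: g itself if g' > 0 throughout (zl,zr),
   and the constant g^+(zl) = g zl otherwise (i.e. when g' <= 0 throughout). *)
Definition tilde (g : R -> R) (zl zr : R) (x : R) : R :=
  if excluded_middle_informative (forall y, zl < y < zr -> 0 < Derive g y)
  then g x else g zl.

From Stdlib Require Import Reals ClassicalEpsilon Lra Lia.
From Coquelicot Require Import Coquelicot.
Open Scope R_scope.

(* On the j-th piece put K = ã c̃^2, so that q = K (I + A_j) with I' = 1 / K and A_j >= 0.
   Then q' = K' (I + A_j) + 1 >= 1 because ã and c̃ are nondecreasing, and
   (q / a)' = (K / a)' (I + A_j) + 1 / a >= 1 / a, because ã is chosen so that ã / a is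
   nondecreasing (ã = a, or ã is constant where a' <= 0); likewise for c^2.
   At an interface z_j the factors alpha_j, sigma_j, gamma_j dominate the ratios of the
   one-sided values of ã, c̃^2 and a (or c^2), so that q, q / a and q / c^2 can only jump up. *)

Lemma at_left_open_interval l r : l < r -> at_left r (fun t => l < t < r).
Proof.
  intros Hlr. apply (locally_interval _ r (Finite l) p_infty); simpl; auto.
Qed.

Lemma at_right_open_interval l r : l < r -> at_right l (fun t => l < t < r).
Proof.
  intros Hlr. apply (locally_interval _ l m_infty (Finite r)); simpl; auto.
Qed.

Lemma filterlim_at_left_of_eq_on (u v : R -> R) l r :
  l < r -> (forall x, l < x < r -> u x = v x) -> continuous v r ->
  filterlim u (at_left r) (locally (v r)).
Proof.
  intros Hlr Huv Hv. apply (filterlim_ext_loc v).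
  - eapply filter_imp; [|apply at_left_open_interval, Hlr].
    intros t Ht. symmetry. apply Huv, Ht.
  - eapply filterlim_filter_le_1; [apply filter_le_within|exact Hv].
Qed.

Lemma filterlim_at_right_of_eq_on (u v : R -> R) l r :
  l < r -> (forall x, l < x < r -> u x = v x) -> continuous v l ->
  filterlim u (at_right l) (locally (v l)).
Proof.
  intros Hlr Huv Hv. apply (filterlim_ext_loc v).
  - eapply filter_imp; [|apply at_right_open_interval, Hlr].
    intros t Ht. symmetry. apply Huv, Ht.
  - eapply filterlim_filter_le_1; [apply filter_le_within|exact Hv].
Qed.

Lemma le_on_closed_interval (f : R -> R) l r m :
  l < r -> (forall x, l <= x <= r -> continuous f x) ->
  (forall x, l < x < r -> m <= f x) -> forall x, l <= x <= r -> m <= f x.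
Proof.
  intros Hlr Hc Hm x Hx.
  destruct (Req_dec x l) as [->|Hxl]; [|destruct (Req_dec x r) as [->|Hxr]].
  - apply (filterlim_le (F := at_right l) (fun _ => m) f m (f l)).
    + eapply filter_imp; [exact Hm|apply at_right_open_interval, Hlr].
    + apply filterlim_const.
    + apply (filterlim_at_right_of_eq_on f f l r Hlr (fun _ _ => eq_refl)), Hc; lra.
  - apply (filterlim_le (F := at_left r) (fun _ => m) f m (f r)).
    + eapply filter_imp; [exact Hm|apply at_left_open_interval, Hlr].
    + apply filterlim_const.
    + apply (filterlim_at_left_of_eq_on f f l r Hlr (fun _ _ => eq_refl)), Hc; lra.
  - apply Hm; lra.
Qed.

Lemma increasing_of_is_derive_pos (P dP : R -> R) l r :
  (forall x, l <= x <= r -> is_derive P x (dP x)) -> (forall x, l < x < r -> 0 < dP x) ->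
  forall x y, l <= x -> x < y -> y <= r -> P x < P y.
Proof.
  intros HP Hpos x y Hlx Hxy Hyr.
  destruct (MVT_cor2 P dP x y Hxy) as [t [Ht Htxy]].
  { intros t Ht. apply is_derive_Reals, HP. lra. }
  assert (0 < dP t * (y - x)) by (apply Rmult_lt_0_compat; [apply Hpos|]; lra).
  lra.
Qed.

(* Extending [h] continuously to all of [R] makes the primitive differentiable at the
   endpoints too. *)
Lemma continuous_primitive (h : R -> R) l r :
  (forall y, l <= y <= r -> continuous h y) ->
  {I : R -> R | forall y, l <= y <= r -> is_derive I y (h y) /\ RInt h l y = I y}.
Proof.
  intros Hh. destruct (C0_extension_le h l r Hh) as [h' [Hc' Heq]].
  exists (fun y => RInt h' l y). intros y Hy. split.
  - rewrite <- Heq by exact Hy. apply (is_derive_RInt h' _ l y); [|apply Hc'].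
    apply filter_forall. intros b.
    apply (RInt_correct h'), (ex_RInt_continuous h'). intros; apply Hc'.
  - apply RInt_ext. intros x Hx.
    rewrite Rmin_left, Rmax_right in Hx by lra. symmetry. apply Heq. lra.
Qed.

Lemma is_derive_sq (v : R -> R) x dv :
  is_derive v x dv -> is_derive (fun t => v t ^ 2) x (2 * dv * v x).
Proof.
  intros H. replace (2 * dv * v x) with (INR 2 * dv * v x ^ Nat.pred 2) by (simpl; ring).
  apply is_derive_pow, H.
Qed.

Lemma strictly_increasing_le (N : nat) (z : nat -> R) :
  (forall j, (j < N)%nat -> z j < z (S j)) ->
  forall i k, (i <= k)%nat -> (k <= N)%nat -> z i <= z k.
Proof.
  intros Hz i k Hik HkN. induction k as [|k IH].
  - replace i with 0%nat by lia. lra.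
  - destruct (Nat.eq_dec i (S k)) as [->|Hne]; [lra|].
    specialize (Hz k ltac:(lia)). specialize (IH ltac:(lia) ltac:(lia)). lra.
Qed.

Lemma tilde_cases (f : R -> R) l r :
  ((forall x, tilde f l r x = f x) /\ (forall x, l < x < r -> 0 < Derive f x)) \/
  ((forall x, tilde f l r x = f l) /\ ~ (forall x, l < x < r -> 0 < Derive f x)).
Proof.
  unfold tilde. destruct (excluded_middle_informative _); [left|right]; auto.
Qed.

Lemma tilde_at_left (f : R -> R) l r : tilde f l r l = f l.
Proof. destruct (tilde_cases f l r) as [[-> _]|[-> _]]; reflexivity. Qed.

Lemma tilde_pos (f : R -> R) l r x :
  (forall y, l <= y <= r -> 0 < f y) -> l <= x <= r -> 0 < tilde f l r x.
Proof.
  intros Hf Hx. destruct (tilde_cases f l r) as [[-> _]|[-> _]]; apply Hf; lra.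
Qed.

Lemma ex_derive_tilde (f : R -> R) l r x :
  (forall y, l <= y <= r -> ex_derive f y) -> l <= x <= r -> ex_derive (tilde f l r) x.
Proof.
  intros Hf Hx. destruct (tilde_cases f l r) as [[E _]|[E _]].
  - apply (ex_derive_ext f); [intros; symmetry; apply E|apply Hf, Hx].
  - apply (ex_derive_ext (fun _ => f l)); [intros; symmetry; apply E|apply ex_derive_const].
Qed.

Lemma Derive_tilde_nonneg (f : R -> R) l r x : l < x < r -> 0 <= Derive (tilde f l r) x.
Proof.
  intros Hx. destruct (tilde_cases f l r) as [[E Hpos]|[E _]].
  - rewrite (Derive_ext _ _ _ E). left. apply Hpos, Hx.
  - rewrite (Derive_ext _ _ _ E), Derive_const. lra.
Qed.

Lemma tilde_ratio_derive_nonneg (f : R -> R) l r x :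
  (forall y, l <= y <= r -> 0 < f y) ->
  ((forall y, l < y < r -> 0 < Derive f y) \/ (forall y, l < y < r -> Derive f y <= 0)) ->
  l < x < r -> 0 <= Derive (tilde f l r) x * f x - tilde f l r x * Derive f x.
Proof.
  intros Hf Hsign Hx. destruct (tilde_cases f l r) as [[E _]|[E Hnot]].
  - rewrite (Derive_ext _ _ _ E), E. lra.
  - rewrite (Derive_ext _ _ _ E), Derive_const, E.
    destruct Hsign as [Hs|Hs]; [contradiction|].
    specialize (Hs x Hx). assert (0 < f l) by (apply Hf; lra). nra.
Qed.

Lemma quotient_derive_ge (dK K X u du : R) :
  0 < u -> 0 <= X -> 0 <= dK * u - K * du ->
  1 / u <= ((dK * X + 1) * u - K * X * du) / u ^ 2.
Proof.
  intros Hu HX Hcross.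
  replace (((dK * X + 1) * u - K * X * du) / u ^ 2)
    with (1 / u + X * (dK * u - K * du) / u ^ 2) by (field; lra).
  assert (0 <= X * (dK * u - K * du) / u ^ 2).
  { apply Rdiv_le_0_compat; [apply Rmult_le_pos; assumption|apply pow_lt, Hu]. }
  lra.
Qed.

Lemma ratio_derive_num_nonneg (F dF G dG f df : R) :
  0 < F -> 0 < G -> 0 < f -> 0 <= dG -> 0 <= dF * f - F * df ->
  0 <= (dF * G ^ 2 + F * (2 * dG * G)) * f - F * G ^ 2 * df.
Proof.
  intros HF HG Hf HdG Hcross.
  replace ((dF * G ^ 2 + F * (2 * dG * G)) * f - F * G ^ 2 * df)
    with (G ^ 2 * (dF * f - F * df) + 2 * F * G * dG * f) by ring.
  assert (0 <= 2 * F * G * dG * f) by (repeat apply Rmult_le_pos; lra).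
  assert (0 <= G ^ 2 * (dF * f - F * df)) by (apply Rmult_le_pos; [apply pow_le; lra|exact Hcross]).
  lra.
Qed.

Lemma ratio_sq_derive_num_nonneg (F dF G dG g dg : R) :
  0 < F -> 0 < G -> 0 < g -> 0 <= dF -> 0 <= dG * g - G * dg ->
  0 <= (dF * G ^ 2 + F * (2 * dG * G)) * g ^ 2 - F * G ^ 2 * (2 * dg * g).
Proof.
  intros HF HG Hg HdF Hcross.
  replace ((dF * G ^ 2 + F * (2 * dG * G)) * g ^ 2 - F * G ^ 2 * (2 * dg * g))
    with (dF * G ^ 2 * g ^ 2 + 2 * F * G * g * (dG * g - G * dg)) by ring.
  assert (0 <= dF * G ^ 2 * g ^ 2) by (repeat apply Rmult_le_pos; try apply pow_le; lra).
  assert (0 <= 2 * F * G * g * (dG * g - G * dg)) by (repeat apply Rmult_le_pos; lra).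
  lra.
Qed.

Section Piece.

Variables (l r B : R) (f g a c q : R -> R).
Hypothesis Hlr : l < r.
Hypothesis HB : 0 <= B.
Hypothesis Hf : forall x, l <= x <= r -> ex_derive f x /\ 0 < f x.
Hypothesis Hg : forall x, l <= x <= r -> ex_derive g x /\ 0 < g x.
Hypothesis Hf_sign :
  (forall x, l < x < r -> 0 < Derive f x) \/ (forall x, l < x < r -> Derive f x <= 0).
Hypothesis Hg_sign :
  (forall x, l < x < r -> 0 < Derive g x) \/ (forall x, l < x < r -> Derive g x <= 0).
Hypothesis Hac : forall x, l < x < r -> a x = f x /\ c x = g x.
Hypothesis Hq : forall x, l < x < r ->
  q x = tilde f l r x * tilde g l r x ^ 2 *
        (RInt (fun s => 1 / (tilde f l r s * tilde g l r s ^ 2)) l x + B).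

Local Notation F := (tilde f l r).
Local Notation G := (tilde g l r).
Let K x := F x * G x ^ 2.
Let dK x := Derive F x * G x ^ 2 + F x * (2 * Derive G x * G x).
Let w s := 1 / K s.

Let F_pos x : l <= x <= r -> 0 < F x.
Proof. apply tilde_pos. intros; apply Hf; assumption. Qed.

Let G_pos x : l <= x <= r -> 0 < G x.
Proof. apply tilde_pos. intros; apply Hg; assumption. Qed.

Let K_pos x : l <= x <= r -> 0 < K x.
Proof.
  intros Hx. apply Rmult_lt_0_compat; [|apply pow_lt]; [apply F_pos|apply G_pos]; exact Hx.
Qed.

Let is_derive_K x : l <= x <= r -> is_derive K x (dK x).
Proof.
  intros Hx. apply (is_derive_mult F (fun t => G t ^ 2)); [| |intros; apply Rmult_comm].
  - apply Derive_correct, ex_derive_tilde; [intros; apply Hf; assumption|exact Hx].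
  - apply is_derive_sq, Derive_correct, ex_derive_tilde; [intros; apply Hg; assumption|exact Hx].
Qed.

Let dK_nonneg x : l < x < r -> 0 <= dK x.
Proof.
  intros Hx. assert (HF := F_pos x ltac:(lra)). assert (HG := G_pos x ltac:(lra)).
  assert (HdF := Derive_tilde_nonneg f l r x Hx). assert (HdG := Derive_tilde_nonneg g l r x Hx).
  unfold dK. apply Rplus_le_le_0_compat.
  - apply Rmult_le_pos; [exact HdF|apply pow_le; lra].
  - repeat apply Rmult_le_pos; lra.
Qed.

Let w_continuous x : l <= x <= r -> continuous w x.
Proof.
  intros Hx. apply (ex_derive_continuous (K := R_AbsRing) (V := R_NormedModule)).
  eexists. apply (is_derive_div (fun _ => 1) K).
  - apply is_derive_const.
  - apply is_derive_K, Hx.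
  - apply Rgt_not_eq, K_pos, Hx.
Qed.

Let I := proj1_sig (continuous_primitive w l r w_continuous).

Let is_derive_I x : l <= x <= r -> is_derive I x (w x).
Proof. intros Hx. apply (proj2_sig (continuous_primitive w l r w_continuous)), Hx. Qed.

Let RInt_w x : l <= x <= r -> RInt w l x = I x.
Proof. intros Hx. apply (proj2_sig (continuous_primitive w l r w_continuous)), Hx. Qed.

Let I_nonneg x : l <= x <= r -> 0 <= I x.
Proof.
  intros Hx. assert (HIl : I l = 0) by (rewrite <- RInt_w, RInt_point; [reflexivity|lra]).
  destruct (Req_dec x l) as [->|Hxl]; [lra|].
  assert (I l < I x); [|lra].
  apply (increasing_of_is_derive_pos I w l r); try lra.
  - exact is_derive_I.
  - intros t Ht. apply Rdiv_lt_0_compat; [lra|apply K_pos; lra].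
Qed.

Let P x := K x * (I x + B).

Let is_derive_P x : l <= x <= r -> is_derive P x (dK x * (I x + B) + 1).
Proof.
  intros Hx. replace 1 with (K x * (w x + 0)).
  - apply (is_derive_mult K (fun t => I t + B)); [apply is_derive_K, Hx| |intros; apply Rmult_comm].
    apply (is_derive_plus I (fun _ => B)); [apply is_derive_I, Hx|].
    apply (is_derive_const (K := R_AbsRing) (V := R_NormedModule)).
  - unfold w. rewrite Rplus_0_r. field. apply Rgt_not_eq, K_pos, Hx.
Qed.

Let P_increasing x y : l <= x -> x < y -> y <= r -> P x < P y.
Proof.
  apply (increasing_of_is_derive_pos P (fun t => dK t * (I t + B) + 1)); [exact is_derive_P|].
  intros t Ht. assert (0 <= dK t * (I t + B)); [|lra].
  apply Rmult_le_pos; [apply dK_nonneg, Ht|]. assert (0 <= I t) by (apply I_nonneg; lra). lra.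
Qed.

Let q_eq_P x : l < x < r -> q x = P x.
Proof. intros Hx. rewrite Hq by exact Hx. unfold P. rewrite <- RInt_w by lra. reflexivity. Qed.

Let P_left : P l = f l * g l ^ 2 * B.
Proof.
  unfold P, K. rewrite <- RInt_w, RInt_point, !tilde_at_left by lra.
  rewrite Rplus_0_l. reflexivity.
Qed.

Let P_right : P r = F r * G r ^ 2 * (RInt (fun s => 1 / (F s * G s ^ 2)) l r + B).
Proof. unfold P. rewrite <- RInt_w by lra. reflexivity. Qed.

Lemma RInt_weight_nonneg : 0 <= RInt (fun s => 1 / (F s * G s ^ 2)) l r.
Proof. change (0 <= RInt w l r). rewrite RInt_w by lra. apply I_nonneg. lra. Qed.

Lemma q_increasing_on_piece x y : l < x < r -> l < y < r -> x < y -> q x < q y.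
Proof. intros Hx Hy Hxy. rewrite !q_eq_P by assumption. apply P_increasing; lra. Qed.

Lemma q_lt_right_value x : l < x < r ->
  q x < F r * G r ^ 2 * (RInt (fun s => 1 / (F s * G s ^ 2)) l r + B).
Proof. intros Hx. rewrite <- P_right, q_eq_P by exact Hx. apply P_increasing; lra. Qed.

Lemma q_gt_left_value x : l < x < r -> f l * g l ^ 2 * B < q x.
Proof. intros Hx. rewrite <- P_left, q_eq_P by exact Hx. apply P_increasing; lra. Qed.

Lemma q_at_right : filterlim q (at_right l) (locally (f l * g l ^ 2 * B)).
Proof.
  rewrite <- P_left. apply (filterlim_at_right_of_eq_on q P l r Hlr q_eq_P).
  apply (ex_derive_continuous (K := R_AbsRing) (V := R_NormedModule)).
  eexists. apply is_derive_P. lra.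
Qed.

Lemma q_div_limits (u v : R -> R) :
  (forall t, l < t < r -> u t = v t) -> (forall t, l <= t <= r -> ex_derive v t /\ v t <> 0) ->
  filterlim (fun y => q y / u y) (at_left r)
    (locally (F r * G r ^ 2 * (RInt (fun s => 1 / (F s * G s ^ 2)) l r + B) / v r)) /\
  filterlim (fun y => q y / u y) (at_right l) (locally (f l * g l ^ 2 * B / v l)).
Proof.
  intros Huv Hv.
  assert (Hcont : forall t, l <= t <= r -> continuous (fun y => P y / v y) t).
  { intros t Ht. apply (ex_derive_continuous (K := R_AbsRing) (V := R_NormedModule)).
    eexists.
    apply is_derive_div; [apply is_derive_P, Ht|apply Derive_correct, Hv, Ht|apply Hv, Ht]. }
  assert (Heq : forall t, l < t < r -> q t / u t = P t / v t).
  { intros t Ht. rewrite q_eq_P, Huv by exact Ht. reflexivity. }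
  rewrite <- P_left, <- P_right. split.
  - apply (filterlim_at_left_of_eq_on _ (fun y => P y / v y) l r Hlr Heq), Hcont. lra.
  - apply (filterlim_at_right_of_eq_on _ (fun y => P y / v y) l r Hlr Heq), Hcont. lra.
Qed.

Let q_div_derive (u v : R -> R) x dv :
  l < x < r -> (forall t, l < t < r -> u t = v t) -> is_derive v x dv -> 0 < v x ->
  0 <= dK x * v x - K x * dv ->
  ex_derive (fun y => q y / u y) x /\ 1 / u x <= Derive (fun y => q y / u y) x.
Proof.
  intros Hx Huv Hdv Hv Hcross.
  assert (HD := is_derive_div P v x _ dv (is_derive_P x ltac:(lra)) Hdv (Rgt_not_eq _ _ Hv)).
  assert (Hloc : locally x (fun t => P t / v t = q t / u t)).
  { apply (locally_interval _ x (Finite l) (Finite r)); [apply Hx|apply Hx|].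
    intros t Hl Hr. simpl in Hl, Hr. rewrite q_eq_P, Huv by lra. reflexivity. }
  apply (is_derive_ext_loc _ _ x _ Hloc) in HD.
  split; [eexists; exact HD|].
  assert (E : Derive (fun y => q y / u y) x =
            ((dK x * (I x + B) + 1) * v x - P x * dv) / v x ^ 2)
    by (apply is_derive_unique; exact HD).
  rewrite E, Huv by exact Hx. unfold P.
  apply quotient_derive_ge; [exact Hv| |exact Hcross].
  apply Rplus_le_le_0_compat; [apply I_nonneg; lra|exact HB].
Qed.

Lemma q_div_a_derive x : l < x < r ->
  ex_derive (fun y => q y / a y) x /\ 1 / a x <= Derive (fun y => q y / a y) x.
Proof.
  intros Hx. destruct (Hf x ltac:(lra)) as [Hdf Hfx].
  apply (q_div_derive a f x (Derive f x) Hx).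
  - intros t Ht. apply Hac, Ht.
  - apply Derive_correct, Hdf.
  - exact Hfx.
  - apply ratio_derive_num_nonneg; [apply F_pos; lra|apply G_pos; lra|exact Hfx|
      apply Derive_tilde_nonneg, Hx|].
    apply tilde_ratio_derive_nonneg; [intros; apply Hf; assumption|exact Hf_sign|exact Hx].
Qed.

Lemma q_div_c2_derive x : l < x < r ->
  ex_derive (fun y => q y / c y ^ 2) x /\ 1 / c x ^ 2 <= Derive (fun y => q y / c y ^ 2) x.
Proof.
  intros Hx. destruct (Hg x ltac:(lra)) as [Hdg Hgx].
  apply (q_div_derive (fun y => c y ^ 2) (fun y => g y ^ 2) x (2 * Derive g x * g x) Hx).
  - intros t Ht. destruct (Hac t Ht) as [_ ->]. reflexivity.
  - apply is_derive_sq, Derive_correct, Hdg.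
  - apply pow_lt, Hgx.
  - apply ratio_sq_derive_num_nonneg; [apply F_pos; lra|apply G_pos; lra|exact Hgx|
      apply Derive_tilde_nonneg, Hx|].
    apply tilde_ratio_derive_nonneg; [intros; apply Hg; assumption|exact Hg_sign|exact Hx].
Qed.

End Piece.

Lemma interface_le (F1 F2 G1 G2 u1 u2 X al si ga : R) :
  0 <= F1 -> 0 < F2 -> 0 <= G1 -> 0 < G2 -> 0 < u1 -> 0 < u2 -> 0 <= X ->
  F1 / F2 <= al -> G1 / G2 <= si -> u2 / u1 <= ga ->
  F1 * G1 * X / u1 <= F2 * G2 * (al * si * ga * X) / u2.
Proof.
  intros HF1 HF2 HG1 HG2 Hu1 Hu2 HX Hal Hsi Hga.
  apply Rle_div_l in Hal; [|lra]. apply Rle_div_l in Hsi; [|lra]. apply Rle_div_l in Hga; [|lra].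
  apply Rle_div_l; [lra|].
  replace (F2 * G2 * (al * si * ga * X) / u2 * u1) with (al * F2 * (si * G2) * (ga * u1) * X / u2)
    by (field; lra).
  apply (Rle_div_r _ _ u2); [lra|].
  replace (F1 * G1 * X * u2) with (F1 * G1 * u2 * X) by ring.
  apply Rmult_le_compat_r; [exact HX|].
  apply Rmult_le_compat; [apply Rmult_le_pos; lra|lra| |exact Hga].
  apply Rmult_le_compat; lra.
Qed.

Lemma piecewise_increasing (N : nat) (z : nat -> R) (q : R -> R) :
  (forall j, (j < N)%nat -> z j < z (S j)) ->
  (forall j, (1 <= j <= N)%nat -> forall x y,
     z (pred j) < x < z j -> z (pred j) < y < z j -> x < y -> q x < q y) ->
  (forall j, (1 <= j <= N - 1)%nat -> forall x y,
     z (pred j) < x < z j -> z j < y < z (S j) -> q x < q y) ->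
  forall x y j k, (1 <= j <= N)%nat -> (1 <= k <= N)%nat ->
     z (pred j) < x < z j -> z (pred k) < y < z k -> x < y -> q x < q y.
Proof.
  intros Hz Hin Hnext.
  assert (Hfar : forall (d j : nat) (x y : R), (1 <= j)%nat -> (j + d < N)%nat ->
            z (pred j) < x < z j -> z (j + d)%nat < y < z (S (j + d)) -> q x < q y).
  { induction d as [|d IH]; intros j x y Hj HjN Hx Hy.
    - rewrite Nat.add_0_r in Hy. exact (Hnext j ltac:(lia) x y Hx Hy).
    - assert (Hd := Hz (j + d)%nat ltac:(lia)).
      set (m := (z (j + d)%nat + z (S (j + d))) / 2).
      assert (Hm : z (j + d)%nat < m < z (S (j + d))) by (unfold m; lra).
      apply (Rlt_trans _ (q m)); [apply (IH j x m); [lia|lia|exact Hx|exact Hm]|].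
      replace (j + S d)%nat with (S (j + d)) in Hy by lia.
      exact (Hnext (S (j + d)) ltac:(lia) m y Hm Hy). }
  intros x y j k Hj Hk Hx Hy Hxy.
  destruct (Nat.lt_total j k) as [Hjk|[<-|Hkj]].
  - apply (Hfar (k - S j)%nat j x y); [lia|lia|exact Hx|].
    replace (j + (k - S j))%nat with (pred k) by lia.
    replace (S (pred k)) with k by lia. exact Hy.
  - exact (Hin j Hj x y Hx Hy Hxy).
  - assert (z k <= z (pred j)) by (apply (strictly_increasing_le N z Hz); lia). lra.
Qed.

Lemma piece_pos_of_lower_bound (N : nat) (z : nat -> R) (h : R -> R) (p : nat -> R -> R) m :
  (forall j, (j < N)%nat -> z j < z (S j)) -> 0 < m ->
  (forall x, z O <= x <= z N -> m <= h x) ->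
  (forall j, (1 <= j <= N)%nat -> forall x, z (pred j) < x < z j -> h x = p j x) ->
  (forall j, (1 <= j <= N)%nat -> forall x, z (pred j) <= x <= z j -> ex_derive (p j) x) ->
  forall j, (1 <= j <= N)%nat -> forall x, z (pred j) <= x <= z j ->
    ex_derive (p j) x /\ 0 < p j x.
Proof.
  intros Hz Hm Hh Hhp Hp j Hj x Hx. split; [apply Hp; assumption|].
  assert (Hlr : z (pred j) < z j) by (replace j with (S (pred j)) at 2 by lia; apply Hz; lia).
  assert (z O <= z (pred j) /\ z j <= z N)
    by (split; apply (strictly_increasing_le N z Hz); lia).
  apply (Rlt_le_trans _ m); [exact Hm|].
  apply (le_on_closed_interval (p j) (z (pred j)) (z j)); [exact Hlr| |intros t Ht|exact Hx].
  - intros t Ht.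
    apply (ex_derive_continuous (K := R_AbsRing) (V := R_NormedModule)), Hp; assumption.
  - rewrite <- Hhp by assumption. apply Hh. lra.
Qed.

Section Partition.

Variables (N : nat) (z : nat -> R) (a c q : R -> R) (ap cp : nat -> R -> R) (A : nat -> R).
Hypothesis Hz : forall j, (j < N)%nat -> z j < z (S j).
Hypothesis Hac : forall j, (1 <= j <= N)%nat ->
  forall x, z (pred j) < x < z j -> a x = ap j x /\ c x = cp j x.
Hypothesis Hap : forall j, (1 <= j <= N)%nat ->
  forall x, z (pred j) <= x <= z j -> ex_derive (ap j) x /\ 0 < ap j x.
Hypothesis Hcp : forall j, (1 <= j <= N)%nat ->
  forall x, z (pred j) <= x <= z j -> ex_derive (cp j) x /\ 0 < cp j x.
Hypothesis Hap_sign : forall j, (1 <= j <= N)%nat ->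
  (forall x, z (pred j) < x < z j -> 0 < Derive (ap j) x) \/
  (forall x, z (pred j) < x < z j -> Derive (ap j) x <= 0).
Hypothesis Hcp_sign : forall j, (1 <= j <= N)%nat ->
  (forall x, z (pred j) < x < z j -> 0 < Derive (cp j) x) \/
  (forall x, z (pred j) < x < z j -> Derive (cp j) x <= 0).

Local Notation at_ j := (tilde (ap j) (z (pred j)) (z j)).
Local Notation ct j := (tilde (cp j) (z (pred j)) (z j)).
Local Notation Iw j := (RInt (fun s => 1 / (at_ j s * ct j s ^ 2)) (z (pred j)) (z j)).
Local Notation alpha j := (Rmax (at_ j (z j) / at_ (S j) (z j)) 1).
Local Notation sigma j := (Rmax (ct j (z j) ^ 2 / ct (S j) (z j) ^ 2) 1).
Local Notation gamma j :=
  (Rmax (Rmax (ap (S j) (z j) / ap j (z j)) (cp (S j) (z j) ^ 2 / cp j (z j) ^ 2)) 1).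

Hypothesis HA1 : A 1%nat = 0.
Hypothesis HArec : forall j, (1 <= j <= N - 1)%nat ->
  A (S j) = alpha j * sigma j * gamma j * (Iw j + A j).
Hypothesis Hq : forall j, (1 <= j <= N)%nat -> forall x, z (pred j) < x < z j ->
  q x = at_ j x * ct j x ^ 2 *
        (RInt (fun s => 1 / (at_ j s * ct j s ^ 2)) (z (pred j)) x + A j).

Let piece_lt j : (1 <= j <= N)%nat -> z (pred j) < z j.
Proof. intros Hj. replace j with (S (pred j)) at 2 by lia. apply Hz. lia. Qed.

Let A_nonneg j : (1 <= j <= N)%nat -> 0 <= A j.
Proof.
  induction j as [|j IH]; intros Hj; [lia|].
  destruct (Nat.eq_dec j 0) as [->|Hj0]; [rewrite HA1; lra|].
  rewrite HArec by lia.
  assert (HI := RInt_weight_nonneg _ _ (ap j) (cp j) (piece_lt j ltac:(lia))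
                  (Hap j ltac:(lia)) (Hcp j ltac:(lia))).
  assert (Hal := Rmax_r (at_ j (z j) / at_ (S j) (z j)) 1).
  assert (Hsi := Rmax_r (ct j (z j) ^ 2 / ct (S j) (z j) ^ 2) 1).
  assert (Hga := Rmax_r (Rmax (ap (S j) (z j) / ap j (z j))
                              (cp (S j) (z j) ^ 2 / cp j (z j) ^ 2)) 1).
  specialize (IH ltac:(lia)).
  apply Rmult_le_pos; [repeat apply Rmult_le_pos; lra|lra].
Qed.

Let interface_values k (u1 u2 : R) : (1 <= k <= N - 1)%nat -> 0 < u1 -> 0 < u2 ->
  u2 / u1 <= gamma k ->
  at_ k (z k) * ct k (z k) ^ 2 * (Iw k + A k) / u1 <=
  ap (S k) (z k) * cp (S k) (z k) ^ 2 * A (S k) / u2.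
Proof.
  intros Hk Hu1 Hu2 Hga. rewrite HArec by exact Hk.
  assert (Hk1 : (1 <= k <= N)%nat) by lia.
  assert (Hk2 : (1 <= S k <= N)%nat) by lia.
  assert (Hzk : z (pred k) <= z k <= z k) by (assert (H := piece_lt k Hk1); lra).
  assert (Hzk' : z k <= z k <= z (S k)) by (assert (H := Hz k ltac:(lia)); lra).
  rewrite !tilde_at_left.
  apply interface_le; try assumption.
  - left. apply tilde_pos, Hzk. intros; apply Hap; assumption.
  - apply Hap; assumption.
  - apply pow_le. left. apply tilde_pos, Hzk. intros; apply Hcp; assumption.
  - apply pow_lt, Hcp; assumption.
  - apply Rplus_le_le_0_compat; [|apply A_nonneg, Hk1].
    apply RInt_weight_nonneg; [apply piece_lt, Hk1|apply Hap, Hk1|apply Hcp, Hk1].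
  - apply Rmax_l.
  - apply Rmax_l.
Qed.

Lemma q_increasing x y j k : (1 <= j <= N)%nat -> (1 <= k <= N)%nat ->
  z (pred j) < x < z j -> z (pred k) < y < z k -> x < y -> q x < q y.
Proof.
  apply (piecewise_increasing N z q Hz).
  - intros i Hi. exact (q_increasing_on_piece _ _ (A i) (ap i) (cp i) q (piece_lt i Hi)
                          (A_nonneg i Hi) (Hap i Hi) (Hcp i Hi) (Hq i Hi)).
  - intros i Hi x' y' Hx Hy.
    assert (Hi1 : (1 <= i <= N)%nat) by lia. assert (Hi2 : (1 <= S i <= N)%nat) by lia.
    assert (Hleft := q_lt_right_value _ _ _ _ _ q (piece_lt i Hi1) (A_nonneg i Hi1)
                       (Hap i Hi1) (Hcp i Hi1) (Hq i Hi1) x' Hx).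
    assert (Hright := q_gt_left_value _ _ _ _ _ q (piece_lt (S i) Hi2) (A_nonneg (S i) Hi2)
                        (Hap (S i) Hi2) (Hcp (S i) Hi2) (Hq (S i) Hi2) y' Hy).
    assert (Hjump := interface_values i 1 1 Hi Rlt_0_1 Rlt_0_1
                       ltac:(rewrite Rdiv_1_r; apply Rmax_r)).
    rewrite !Rdiv_1_r in Hjump. cbn [pred] in Hright. lra.
Qed.

Lemma q_at_start : (1 <= N)%nat -> filterlim q (at_right (z O)) (locally 0).
Proof.
  intros HN. assert (H1 : (1 <= 1 <= N)%nat) by lia.
  assert (H := q_at_right _ _ (A 1%nat) (ap 1%nat) (cp 1%nat) q (piece_lt 1 H1)
                 (Hap 1 H1) (Hcp 1 H1) (Hq 1 H1)).
  rewrite HA1, Rmult_0_r in H. exact H.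
Qed.

Lemma q_div_derivatives j : (1 <= j <= N)%nat -> forall x, z (pred j) < x < z j ->
  ex_derive (fun y => q y / a y) x /\ 1 / a x <= Derive (fun y => q y / a y) x /\
  ex_derive (fun y => q y / c y ^ 2) x /\ 1 / c x ^ 2 <= Derive (fun y => q y / c y ^ 2) x.
Proof.
  intros Hj x Hx.
  destruct (q_div_a_derive _ _ (A j) (ap j) (cp j) a c q (piece_lt j Hj) (A_nonneg j Hj)
              (Hap j Hj) (Hcp j Hj) (Hap_sign j Hj) (Hac j Hj) (Hq j Hj) x Hx).
  destruct (q_div_c2_derive _ _ (A j) (ap j) (cp j) a c q (piece_lt j Hj) (A_nonneg j Hj)
              (Hap j Hj) (Hcp j Hj) (Hcp_sign j Hj) (Hac j Hj) (Hq j Hj) x Hx).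
  tauto.
Qed.

Let q_div_jump (u : R -> R) (v : nat -> R -> R) k : (1 <= k <= N - 1)%nat ->
  (forall j, (1 <= j <= N)%nat -> forall t, z (pred j) < t < z j -> u t = v j t) ->
  (forall j, (1 <= j <= N)%nat -> forall t, z (pred j) <= t <= z j ->
     ex_derive (v j) t /\ 0 < v j t) ->
  v (S k) (z k) / v k (z k) <= gamma k ->
  exists lm lp,
    filterlim (fun y => q y / u y) (at_left (z k)) (locally lm) /\
    filterlim (fun y => q y / u y) (at_right (z k)) (locally lp) /\
    lm - lp <= 0.
Proof.
  intros Hk Huv Hv Hga.
  assert (Hk1 : (1 <= k <= N)%nat) by lia.
  assert (Hk2 : (1 <= S k <= N)%nat) by lia.
  assert (Hv0 : forall j, (1 <= j <= N)%nat -> forall t, z (pred j) <= t <= z j ->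
            ex_derive (v j) t /\ v j t <> 0).
  { intros j Hj t Ht. destruct (Hv j Hj t Ht). split; [assumption|lra]. }
  destruct (q_div_limits _ _ (A k) (ap k) (cp k) q (piece_lt k Hk1) (Hap k Hk1) (Hcp k Hk1)
              (Hq k Hk1) u (v k) (Huv k Hk1) (Hv0 k Hk1)) as [Hleft _].
  destruct (q_div_limits _ _ (A (S k)) (ap (S k)) (cp (S k)) q (piece_lt (S k) Hk2)
              (Hap (S k) Hk2) (Hcp (S k) Hk2) (Hq (S k) Hk2) u (v (S k)) (Huv (S k) Hk2)
              (Hv0 (S k) Hk2)) as [_ Hright].
  do 2 eexists. split; [exact Hleft|]. split; [exact Hright|]. cbn [pred].
  assert (Hzk : z (pred k) <= z k <= z k) by (assert (H := piece_lt k Hk1); lra).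
  assert (Hzk' : z k <= z k <= z (S k)) by (assert (H := Hz k ltac:(lia)); lra).
  assert (H := interface_values k _ _ Hk (proj2 (Hv k Hk1 _ Hzk))
                 (proj2 (Hv (S k) Hk2 _ Hzk')) Hga).
  lra.
Qed.

Lemma q_div_jumps k : (1 <= k <= N - 1)%nat ->
  (exists lm lp,
     filterlim (fun y => q y / a y) (at_left (z k)) (locally lm) /\
     filterlim (fun y => q y / a y) (at_right (z k)) (locally lp) /\ lm - lp <= 0) /\
  (exists lm lp,
     filterlim (fun y => q y / c y ^ 2) (at_left (z k)) (locally lm) /\
     filterlim (fun y => q y / c y ^ 2) (at_right (z k)) (locally lp) /\ lm - lp <= 0).
Proof.
  intros Hk. split.
  - apply (q_div_jump a ap k Hk); [intros; apply Hac; assumption|exact Hap|].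
    eapply Rle_trans; apply Rmax_l.
  - apply (q_div_jump (fun y => c y ^ 2) (fun j t => cp j t ^ 2) k Hk).
    + intros j Hj t Ht. destruct (Hac j Hj t Ht) as [_ ->]. reflexivity.
    + intros j Hj t Ht. destruct (Hcp j Hj t Ht) as [Hd Hpos]. split.
      * destruct Hd as [d Hd]. exists (2 * d * cp j t). apply is_derive_sq, Hd.
      * apply pow_lt, Hpos.
    + eapply Rle_trans; [apply Rmax_r|apply Rmax_l].
Qed.

End Partition.

Theorem lemma5p9 (L : R) (N : nat) (z : nat -> R) (a c : R -> R)
  (ap cp : nat -> R -> R) (amin amax cmin cmax : R) (A : nat -> R) (q : R -> R) :
  0 < L -> (1 <= N)%nat ->
  z O = - L -> z N = L -> (forall j, (j < N)%nat -> z j < z (S j)) ->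
  0 < amin -> 0 < cmin ->
  (forall x, - L <= x <= L -> amin <= a x <= amax /\ cmin <= c x <= cmax) ->
  (* piecewise C^1 on the partition: ap j, cp j are the C^1 pieces on [z_{j-1}, z_j] *)
  (forall j, (1 <= j <= N)%nat ->
     (forall x, z (pred j) < x < z j -> a x = ap j x /\ c x = cp j x) /\
     (forall x, z (pred j) <= x <= z j ->
        ex_derive (ap j) x /\ continuous (Derive (ap j)) x /\
        ex_derive (cp j) x /\ continuous (Derive (cp j)) x) /\
     ((forall x, z (pred j) < x < z j -> 0 < Derive (ap j) x) \/
      (forall x, z (pred j) < x < z j -> Derive (ap j) x <= 0)) /\
     ((forall x, z (pred j) < x < z j -> 0 < Derive (cp j) x) \/
      (forall x, z (pred j) < x < z j -> Derive (cp j) x <= 0))) ->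
  let at_ j := tilde (ap j) (z (pred j)) (z j) in
  let ct j := tilde (cp j) (z (pred j)) (z j) in
  (* alpha_j, sigma_j, gamma_j; one-sided limits at z_j are the values of the pieces *)
  let alpha j := Rmax (at_ j (z j) / at_ (S j) (z j)) 1 in
  let sigma j := Rmax ((ct j (z j))^2 / (ct (S j) (z j))^2) 1 in
  let gamma j := Rmax (Rmax (ap (S j) (z j) / ap j (z j))
                            ((cp (S j) (z j))^2 / (cp j (z j))^2)) 1 in
  A 1%nat = 0 ->
  (forall j, (1 <= j <= N - 1)%nat ->
     A (S j) = alpha j * sigma j * gamma j *
               (RInt (fun s => 1 / (at_ j s * (ct j s)^2)) (z (pred j)) (z j) + A j)) ->
  (forall j, (1 <= j <= N)%nat -> forall x, z (pred j) < x < z j ->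
     q x = at_ j x * (ct j x)^2 *
           (RInt (fun s => 1 / (at_ j s * (ct j s)^2)) (z (pred j)) x + A j)) ->
  (* conclusions *)
  (forall x y j k, (1 <= j <= N)%nat -> (1 <= k <= N)%nat ->
     z (pred j) < x < z j -> z (pred k) < y < z k -> x < y -> q x < q y) /\
  filterlim q (at_right (- L)) (locally 0) /\
  (forall j, (1 <= j <= N)%nat -> forall x, z (pred j) < x < z j ->
     ex_derive (fun y => q y / a y) x /\
     1 / a x <= Derive (fun y => q y / a y) x /\
     ex_derive (fun y => q y / (c y)^2) x /\
     1 / (c x)^2 <= Derive (fun y => q y / (c y)^2) x) /\
  (forall j, (1 <= j <= N - 1)%nat ->
     (exists lm lp,
        filterlim (fun y => q y / a y) (at_left (z j)) (locally lm) /\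
        filterlim (fun y => q y / a y) (at_right (z j)) (locally lp) /\
        lm - lp <= 0) /\
     (exists lm lp,
        filterlim (fun y => q y / (c y)^2) (at_left (z j)) (locally lm) /\
        filterlim (fun y => q y / (c y)^2) (at_right (z j)) (locally lp) /\
        lm - lp <= 0)).
Proof.
  intros HL HN Hz0 HzN Hz Hamin Hcmin Hbd Hpw at_ ct alpha sigma gamma HA1 HArec Hq.
  subst at_ ct alpha sigma gamma. cbv beta in *.
  assert (Hac : forall j, (1 <= j <= N)%nat -> forall x, z (pred j) < x < z j ->
            a x = ap j x /\ c x = cp j x) by apply Hpw.
  assert (Hbound : forall x, z O <= x <= z N -> amin <= a x /\ cmin <= c x).
  { rewrite Hz0, HzN. intros x Hx. destruct (Hbd x Hx) as [Ha Hc]. split; [apply Ha|apply Hc]. }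
  assert (Hap := piece_pos_of_lower_bound N z a ap amin Hz Hamin
                   (fun x Hx => proj1 (Hbound x Hx)) (fun j Hj x Hx => proj1 (Hac j Hj x Hx))
                   (fun j Hj x Hx => proj1 (proj1 (proj2 (Hpw j Hj)) x Hx))).
  assert (Hcp := piece_pos_of_lower_bound N z c cp cmin Hz Hcmin
                   (fun x Hx => proj2 (Hbound x Hx)) (fun j Hj x Hx => proj2 (Hac j Hj x Hx))
                   (fun j Hj x Hx => proj1 (proj2 (proj2 (proj1 (proj2 (Hpw j Hj)) x Hx))))).
  assert (Hap_sign := fun j Hj => proj1 (proj2 (proj2 (Hpw j Hj)))).
  assert (Hcp_sign := fun j Hj => proj2 (proj2 (proj2 (Hpw j Hj)))).
  rewrite <- Hz0. split; [|split; [|split]].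
  - exact (q_increasing N z q ap cp A Hz Hap Hcp HA1 HArec Hq).
  - exact (q_at_start N z q ap cp A Hz Hap Hcp HA1 Hq HN).
  - exact (q_div_derivatives N z a c q ap cp A Hz Hac Hap Hcp Hap_sign Hcp_sign HA1 HArec Hq).
  - exact (q_div_jumps N z a c q ap cp A Hz Hac Hap Hcp HA1 HArec Hq).
Qed.
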